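(* Let $\mathbb{F}$ be a field and $n\ge 0$ an integer with $|\mathbb{F}| \geq 2n-1$. Let $V$ be an $\mathbb{F}$-vector space of dimension $2n$. Then the greatest possible dimension of an affine subspace of $\mathcal{A}^2(V)$ all of whose elements are symplectic forms is $n(n-1)$.
   Context: $\mathcal{A}^2(V)$ denotes the vector space of all alternating bilinear forms on $V$ (bilinear forms $b$ with $b(x,x)=0$ for all $x\in V$). A symplectic form is a non-degenerate alternating bilinear form. The field may have any characteristic, including 2. *)

From HB Require Import structures.
From mathcomp Require Import all_boot all_order all_algebra.
Set Implicit Arguments. Unset Strict Implicit. Unset Printing Implicit Defensive.
Import GRing.Theory.
Local Open Scope ring_scope.

(* V is identified with F^m (row vectors 'rV[F]_m); a bilinear form on V is
   given by its Gram matrix A via  b_A(x,y) = x A y^T. *)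
Definition bform (F : fieldType) (m : nat) (A : 'M[F]_m) (x y : 'rV[F]_m) : F :=
  (x *m A *m y^T) 0 0.

Definition alternating (F : fieldType) (m : nat) (A : 'M[F]_m) : Prop :=
  forall x : 'rV[F]_m, bform A x x = 0.

Definition nondegenerate (F : fieldType) (m : nat) (A : 'M[F]_m) : Prop :=
  forall x : 'rV[F]_m, (forall y : 'rV[F]_m, bform A x y = 0) -> x = 0.

Definition symplectic (F : fieldType) (m : nat) (A : 'M[F]_m) : Prop :=
  alternating A /\ nondegenerate A.

(* the affine subspace A0 + W (W a linear subspace of the space of bilinear
   forms) consists only of symplectic forms; this forces A0 and W to lie in
   the space A^2(V) of alternating forms. *)
Definition symplectic_affine (F : fieldType) (m : nat)
  (A0 : 'M[F]_m) (W : {vspace 'M[F]_m}) : Prop :=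
  forall B, B \in W -> symplectic (A0 + B).

(* Lower bound: for Z with zero diagonal and strictly lower/upper parts L, U, the forms
   [[L - L^T, 1 + U], [-(1 + U)^T, 0]] are symplectic, as 1 + U is unitriangular; they
   make up an affine space of dimension n^2 - n.

   Upper bound, by induction on n: after a congruence, the first row of the base form A0
   is e_1. Split the indices as 0, 1 and a tail R of size k = 2n - 2, and let W' be the
   forms of W whose row 0 vanishes on R (then it vanishes everywhere). The tail blocks of
   A0 + W' form a symplectic affine space of dimension k, and a form of W' with zero tail
   block is determined by its row g = N_{1R}. With D the tail block of A0, the rows
   h = B_{0R} (B in W) and these g satisfy h D^-1 g^T = 0, so both spaces of rows have
   dimensions adding up to at most k, and dim W <= (n-1)(n-2) + 2n - 2 = n(n-1).

   The orthogonality is where |F| >= 2n - 1 enters. For mu != 0, w = e_1 (A0 + mu B)^-1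
   is orthogonal to g (otherwise A0 + mu B + c N is degenerate for some c), which makes
   [[0, h], [g^T, D + mu B_RR]] singular. Its determinant is a polynomial in mu of degree
   less than k vanishing at the k nonzero points of F, so it also vanishes at mu = 0,
   and the kernel vector at mu = 0 yields h D^-1 g^T = 0. *)

From Pilot Require Import Defs.
From HB Require Import structures.
From mathcomp Require Import all_boot all_order all_algebra.
From mathcomp Require Import zify.
Set Implicit Arguments. Unset Strict Implicit. Unset Printing Implicit Defensive.
Import GRing.Theory.
Local Open Scope ring_scope.

Section AlternatingForms.
Variable F : fieldType.

Lemma bform_delta m (A : 'M[F]_m) i j :
  bform A (delta_mx 0 i) (delta_mx 0 j) = A i j.
Proof. by rewrite /bform -rowE trmx_delta -colE !mxE. Qed.

Lemma bformDl m (A : 'M[F]_m) x x' y :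
  bform A (x + x') y = bform A x y + bform A x' y.
Proof. by rewrite /bform !mulmxDl mxE. Qed.

Lemma bformDr m (A : 'M[F]_m) x y y' :
  bform A x (y + y') = bform A x y + bform A x y'.
Proof. by rewrite /bform linearD /= mulmxDr mxE. Qed.

Lemma alternating_diag m (A : 'M[F]_m) : alternating A -> forall i, A i i = 0.
Proof. by move=> hA i; rewrite -bform_delta hA. Qed.

Lemma alternating_antisym m (A : 'M[F]_m) :
  alternating A -> forall i j, A i j = - A j i.
Proof.
move=> hA i j; have := hA (delta_mx 0 i + delta_mx 0 j).
rewrite bformDl !bformDr !bform_delta !alternating_diag // add0r addr0.
by move/eqP; rewrite addr_eq0 => /eqP.
Qed.

Lemma alternating_subtr m (K : 'M[F]_m) : alternating (K - K^T).
Proof.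
move=> x; rewrite /bform.
have -> : x *m (K - K^T) *m x^T = x *m K *m x^T - (x *m K *m x^T)^T.
  by rewrite mulmxBr mulmxBl !trmx_mul trmxK mulmxA.
by rewrite !mxE subrr.
Qed.

(* An antisymmetric matrix with zero diagonal is [L - L^T], [L] its strictly lower part. *)
Lemma alternating_entries m (A : 'M[F]_m) :
  (forall i, A i i = 0) -> (forall i j, A i j = - A j i) -> alternating A.
Proof.
move=> hd hs.
pose L := \matrix_(i, j) (if (j < i)%N then A i j else 0) : 'M[F]_m.
suff -> : A = L - L^T by apply: alternating_subtr.
apply/matrixP=> i j; rewrite !mxE.
case: (ltnP j i) => h1; case: (ltnP i j) => h2.
- by exfalso; lia.
- by rewrite subr0.
- by rewrite sub0r hs.
- have e : i = j by apply: val_inj => /=; lia.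
  by rewrite e hd subrr.
Qed.

(* Unqualified, [nondegenerate] would be MathComp's notion for sesquilinear forms. *)
Lemma nondegenerateP m (A : 'M[F]_m) :
  Defs.nondegenerate A <-> (forall x : 'rV_m, x *m A = 0 -> x = 0).
Proof.
split=> h x hx.
- by apply: h => y; rewrite /bform hx mul0mx mxE.
- apply: h; apply/rowP=> j; rewrite [RHS]mxE.
  by have := hx (delta_mx 0 j); rewrite /bform trmx_delta -colE mxE.
Qed.

Lemma nondegenerate_unitmx m (A : 'M[F]_m) : Defs.nondegenerate A <-> A \in unitmx.
Proof.
rewrite nondegenerateP unitmxE unitfE; split.
- by move=> h; apply/negP => /det0P [v nv /h v0]; rewrite v0 eqxx in nv.
- move=> hd x hx; apply/eqP; apply: contraNT hd => nx.
  by apply/det0P; exists x.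
Qed.

End AlternatingForms.

Section Congruence.
Variable F : fieldType.

Definition cong m (P B : 'M[F]_m) := P *m B *m P^T.

Fact cong_is_semilinear m (P : 'M[F]_m) : semilinear (cong P).
Proof.
split=> [a A|A1 A2]; rewrite /cong; first by rewrite scalemxAl scalemxAr.
by rewrite mulmxDr mulmxDl.
Qed.
HB.instance Definition _ m (P : 'M[F]_m) :=
  GRing.isSemilinear.Build F 'M[F]_m 'M[F]_m _ (cong P) (cong_is_semilinear P).

Lemma bform_cong m (P B : 'M[F]_m) x y :
  bform (cong P B) x y = bform B (x *m P) (y *m P).
Proof. by rewrite /bform /cong trmx_mul !mulmxA. Qed.

Lemma alternating_cong m (P B : 'M[F]_m) : alternating B -> alternating (cong P B).
Proof. by move=> hB x; rewrite bform_cong hB. Qed.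

Lemma nondegenerate_cong m (P B : 'M[F]_m) : P \in unitmx ->
  Defs.nondegenerate B -> Defs.nondegenerate (cong P B).
Proof.
move=> hP hB x hx; suff xP0 : x *m P = 0 by rewrite -(mulmxK hP x) xP0 mul0mx.
by apply: hB => y; have := hx (y *m invmx P); rewrite bform_cong mulmxKV.
Qed.

Lemma cong_eq0 m (P B : 'M[F]_m) : P \in unitmx -> cong P B = 0 -> B = 0.
Proof.
move=> hP /(congr1 (fun X => invmx P *m X *m invmx P^T)).
rewrite /cong mulmx0 mul0mx !mulmxA mulVmx // mul1mx -mulmxA mulmxV ?unitmx_tr //.
by rewrite mulmx1.
Qed.

Lemma symplectic_affine_cong m (P A0 : 'M[F]_m) (W : {vspace 'M[F]_m}) :
  P \in unitmx ->
  (forall B, B \in W -> alternating B) -> alternating A0 ->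
  symplectic_affine A0 W ->
  let W' := (linfun (cong P) @: W)%VS in
  [/\ (forall B, B \in W' -> alternating B), alternating (cong P A0),
      symplectic_affine (cong P A0) W' & \dim W' = \dim W].
Proof.
move=> hP hW hA hS W'; split.
- by move=> B /memv_imgP [B0 hB0 ->]; rewrite lfunE; apply/alternating_cong/hW.
- exact: alternating_cong.
- move=> B /memv_imgP [B0 hB0 ->]; rewrite lfunE /= -linearD /=.
  have [h1 h2] := hS _ hB0.
  by split; [apply: alternating_cong | apply: nondegenerate_cong].
- apply: limg_dim_eq; apply/eqP; rewrite -subv0; apply/subvP => B.
  rewrite memv_cap memv_ker lfunE /= memv0 => /andP [_ /eqP h].
  by apply/eqP; apply: cong_eq0 h.
Qed.

End Congruence.

Section SplitIndex.
Variable F : fieldType.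

Definition ord_one {k} : 'I_k.+2 := lift ord0 ord0.
Definition lift2 {k} (j : 'I_k) : 'I_k.+2 := lift ord0 (lift ord0 j).

Lemma ord_splitP k (a : 'I_k.+2) :
  [\/ a = ord0, a = ord_one | exists j, a = lift2 j].
Proof.
case: (unliftP ord0 a) => [b ->|->]; last by constructor 1.
case: (unliftP ord0 b) => [c ->|->]; last by constructor 2.
by constructor 3; exists c.
Qed.

Lemma big_ord_split k (G : 'I_k.+2 -> F) :
  \sum_(a < k.+2) G a = G ord0 + G ord_one + \sum_(j < k) G (lift2 j).
Proof. by rewrite big_ord_recl big_ord_recl addrA. Qed.

Lemma mulmx_row_split k n (w : 'rV[F]_k.+2) (X : 'M[F]_(k.+2, n)) b :
  (w *m X) 0 b =
  w 0 ord0 * X ord0 b + w 0 ord_one * X ord_one b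
  + \sum_j w 0 (lift2 j) * X (lift2 j) b.
Proof. by rewrite mxE big_ord_split. Qed.

Lemma lift2_eq1 k (j : 'I_k) : (lift2 j == ord_one) = false.
Proof. by rewrite (inj_eq lift_inj) eq_sym; apply/negbTE; rewrite neq_lift. Qed.

Lemma ord_one_eq0 k : (@ord_one k == ord0) = false.
Proof. by apply/negbTE; rewrite eq_sym neq_lift. Qed.

Definition row3 k (c0 c1 : F) (x : 'rV[F]_k) : 'rV[F]_k.+2 :=
  \row_a (match unlift ord0 a with
          | None => c0
          | Some b => if unlift ord0 b is Some j then x 0 j else c1 end).

Lemma row3_0 k c0 c1 (x : 'rV[F]_k) : row3 c0 c1 x 0 ord0 = c0.
Proof. by rewrite mxE unlift_none. Qed.

Lemma row3_1 k c0 c1 (x : 'rV[F]_k) : row3 c0 c1 x 0 ord_one = c1.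
Proof. by rewrite mxE /ord_one liftK unlift_none. Qed.

Lemma row3_lift2 k c0 c1 (x : 'rV[F]_k) j : row3 c0 c1 x 0 (lift2 j) = x 0 j.
Proof. by rewrite mxE /lift2 !liftK. Qed.

Lemma mul_row3 k n c0 c1 (x : 'rV[F]_k) (X : 'M[F]_(k.+2, n)) b :
  (row3 c0 c1 x *m X) 0 b =
  c0 * X ord0 b + c1 * X ord_one b + \sum_j x 0 j * X (lift2 j) b.
Proof.
rewrite mulmx_row_split row3_0 row3_1; congr (_ + _).
by apply: eq_bigr => j _; rewrite row3_lift2.
Qed.

End SplitIndex.

Section TailBlocks.
Variables (F : fieldType) (k : nat).

Definition drop2 (w : 'rV[F]_k.+2) : 'rV[F]_k := \row_j w 0 (lift2 j).
Definition tail_row0 (B : 'M[F]_k.+2) : 'rV[F]_k := drop2 (row ord0 B).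
Definition tail_row1 (B : 'M[F]_k.+2) : 'rV[F]_k := drop2 (row ord_one B).
Definition tail_block (B : 'M[F]_k.+2) : 'M[F]_k :=
  \matrix_(i, j) B (lift2 i) (lift2 j).

Fact tail_row0_is_semilinear : semilinear tail_row0.
Proof. by split=> [a A|A1 A2]; apply/rowP=> j; rewrite !mxE. Qed.
HB.instance Definition _ :=
  GRing.isSemilinear.Build F _ _ _ tail_row0 tail_row0_is_semilinear.

Fact tail_row1_is_semilinear : semilinear tail_row1.
Proof. by split=> [a A|A1 A2]; apply/rowP=> j; rewrite !mxE. Qed.
HB.instance Definition _ :=
  GRing.isSemilinear.Build F _ _ _ tail_row1 tail_row1_is_semilinear.

Fact tail_block_is_semilinear : semilinear tail_block.
Proof. by split=> [a A|A1 A2]; apply/matrixP=> i j; rewrite !mxE. Qed.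
HB.instance Definition _ :=
  GRing.isSemilinear.Build F _ _ _ tail_block tail_block_is_semilinear.

Lemma alternating_tail_block B : alternating B -> alternating (tail_block B).
Proof.
move=> hB; apply: alternating_entries => [i|i j]; rewrite !mxE.
  exact: alternating_diag.
exact: alternating_antisym.
Qed.

Definition normalized (A : 'M[F]_k.+2) := forall l, A ord0 l = (l == ord_one)%:R.

Lemma nondegenerate_tail_block C : alternating C -> normalized C ->
  Defs.nondegenerate C -> Defs.nondegenerate (tail_block C).
Proof.
move=> hA hn /nondegenerateP hN; apply/nondegenerateP => x hx.
pose z := row3 (- \sum_j x 0 j * C (lift2 j) ord_one) 0 x.
suff /hN /rowP z0 : z *m C = 0.
  by apply/rowP=> j; have := z0 (lift2 j); rewrite row3_lift2 !mxE.
apply/rowP=> l; rewrite mul_row3 mul0r addr0 mxE.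
case: (ord_splitP l) => [->| ->|[l' ->]].
- rewrite alternating_diag // mulr0 add0r big1 // => j _.
  by rewrite alternating_antisym // hn lift2_eq1 oppr0 mulr0.
- by rewrite hn eqxx mulr1 addNr.
- rewrite hn lift2_eq1 mulr0 add0r.
  move/rowP: hx => /(_ l'); rewrite !mxE => hx; rewrite -[RHS]hx.
  by apply: eq_bigr => j _; rewrite !mxE.
Qed.

End TailBlocks.

Section Normalization.
Variable F : fieldType.

Lemma unitmx_with_col n (r : 'rV[F]_n) (a : 'I_n) : r != 0 ->
  exists Q : 'M[F]_n, [/\ Q \in unitmx, forall i, Q i a = r 0 i &
     forall i l, r 0 i = 0 -> i != a -> Q i l = (i == l)%:R].
Proof.
move=> nr; have [j hj] : exists j, r 0 j != 0.
  apply/existsP; apply: contraNT nr; rewrite negb_exists => /forallP h.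
  by apply/eqP/rowP=> j; rewrite mxE; apply/eqP; move: (h j); rewrite negbK.
pose Q := \matrix_(i, l) (if l == a then r 0 i
                          else if l == j then (i == a)%:R else (i == l)%:R).
exists Q; split.
- apply/nondegenerate_unitmx/nondegenerateP => x hx.
  have hxl l : \sum_i x 0 i * Q i l = 0 by move/rowP: hx => /(_ l); rewrite !mxE.
  have hne i : i != j -> x 0 i = 0.
    move=> hij; have [hia|hia] := eqVneq i a.
    + have hja : j != a by rewrite -hia eq_sym.
      have := hxl j; rewrite (bigD1 a) //= big1 ?addr0.
        by rewrite mxE (negbTE hja) !eqxx mulr1 hia.
      by move=> i' hi'; rewrite mxE (negbTE hja) eqxx (negbTE hi') mulr0.
    + have := hxl i; rewrite (bigD1 i) //= big1 ?addr0.
        by rewrite mxE (negbTE hia) (negbTE hij) eqxx mulr1.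
      by move=> i' hi'; rewrite mxE (negbTE hia) (negbTE hij) (negbTE hi') mulr0.
  have hxj : x 0 j = 0.
    have := hxl a; rewrite (bigD1 j) //= big1 ?addr0.
      by rewrite mxE eqxx => /eqP; rewrite mulf_eq0 (negbTE hj) orbF => /eqP.
    by move=> i hi; rewrite hne // mul0r.
  apply/rowP=> i; rewrite mxE.
  by have [->|/hne] := eqVneq i j.
- by move=> i; rewrite mxE eqxx.
- move=> i l hri hia; rewrite mxE.
  have [->|hla] := eqVneq l a; first by rewrite hri (negbTE hia).
  have [->|//] := eqVneq l j; rewrite (negbTE hia).
  by have [hij|//] := eqVneq i j; rewrite -hij hri eqxx in hj.
Qed.

Lemma normalize_cong k (A0 : 'M[F]_k.+2) :
  Defs.nondegenerate A0 -> alternating A0 ->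
  exists2 P, P \in unitmx & normalized (cong P A0).
Proof.
move=> hN hA; pose r := row ord0 A0.
have nr : r != 0.
  apply: contraTneq isT => r0.
  have : delta_mx 0 ord0 = 0 :> 'rV[F]_k.+2.
    by move/nondegenerateP: hN; apply; rewrite -rowE -/r r0.
  by move/matrixP/(_ 0 ord0); rewrite !mxE !eqxx => /eqP; rewrite oner_eq0.
have [Q [Qu Qa Qid]] := unitmx_with_col ord_one nr.
have r0 : r 0 ord0 = 0 by rewrite mxE alternating_diag.
have e0Q : delta_mx 0 ord0 *m Q = delta_mx 0 ord0 :> 'rV_k.+2.
  apply/rowP=> l; rewrite -rowE mxE (Qid _ _ r0) ?ord_one_eq0 //.
  by rewrite mxE eqxx eq_sym.
have Qe1 : Q *m delta_mx ord_one 0 = r^T.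
  by apply/colP=> i; rewrite -colE !mxE Qa mxE.
exists (invmx Q); first by rewrite unitmx_inv.
move=> l; have -> : cong (invmx Q) A0 ord0 l = row ord0 (cong (invmx Q) A0) 0 l.
  by rewrite [RHS]mxE.
rewrite rowE /cong !mulmxA.
rewrite -{1}e0Q mulmxK // -rowE -/r -[r]trmxK -trmx_mul -Qe1 mulKmx //.
by rewrite trmx_delta mxE eqxx.
Qed.

End Normalization.

Section OrthogonalSubspaces.
Variable F : fieldType.

Lemma row_free_ker m n (A : 'M[F]_(m, n)) :
  (forall c : 'rV_m, c *m A = 0 -> c = 0) -> row_free A.
Proof.
move=> h; rewrite -kermx_eq0; apply/eqP/row_matrixP=> i.
by rewrite row0; apply: h; rewrite -row_mul mulmx_ker row0.
Qed.

Definition basis_mx k (U : {vspace 'rV[F]_k}) : 'M[F]_(\dim U, k) :=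
  \matrix_(i < \dim U) (vbasis U)`_i.

Lemma rank_basis_mx k (U : {vspace 'rV[F]_k}) : \rank (basis_mx U) = \dim U.
Proof.
apply/eqP/row_free_ker => c hc; apply/rowP=> i; rewrite mxE.
move/freeP: (basis_free (vbasisP U)) => /(_ (fun i => c 0 i)); apply.
by rewrite -[RHS]hc mulmx_sum_row; apply: eq_bigr => j _; rewrite rowK.
Qed.

Lemma orthogonal_dim_leq k (U V : {vspace 'rV[F]_k}) (M : 'M[F]_k) :
  M \in unitmx ->
  (forall u v, u \in U -> v \in V -> (u *m M *m v^T) 0 0 = 0) ->
  (\dim U + \dim V <= k)%N.
Proof.
move=> hM huv; set MU := basis_mx U; set MV := basis_mx V.
have MV0 : MV *m (MU *m M)^T = 0.
  apply/matrixP=> i j; rewrite [RHS]mxE.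
  have vbj := vbasis_mem (mem_nth 0 (_ : (j < size (vbasis U))%N)).
  have vbi := vbasis_mem (mem_nth 0 (_ : (i < size (vbasis V))%N)).
  rewrite -(huv _ _ (vbj _) (vbi _)) ?size_tuple //.
  rewrite !mxE; apply: eq_bigr => l _; rewrite !mxE mulrC; congr (_ * _).
  by apply: eq_bigr => l' _; rewrite !mxE.
have /mxrankS : (MV <= kermx (MU *m M)^T)%MS by apply/sub_kermxP.
rewrite mxrank_ker mxrank_tr mxrankMfree ?row_free_unit // !rank_basis_mx.
have : (\dim U <= k)%N.
  by have := dimvS (subvf U); rewrite dimvf dim_matrix mul1r.
lia.
Qed.

End OrthogonalSubspaces.

Section Pencil.
Variable R : comNzRingType.

Definition pencil_mx n (P0 P1 : 'M[R]_n) : 'M[{poly R}]_n :=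
  \matrix_(i, j) ((P0 i j)%:P + (P1 i j)%:P * 'X).

Lemma horner_det_pencil n (P0 P1 : 'M[R]_n) x :
  (\det (pencil_mx P0 P1)).[x] = \det (P0 + x *: P1).
Proof.
rewrite -horner_evalE -det_map_mx; congr (\det _); apply/matrixP=> i j.
by rewrite !mxE rmorphD rmorphM /= !horner_evalE hornerX !hornerC mulrC.
Qed.

Lemma size_pencil_mx n (P0 P1 : 'M[R]_n) i j : (size (pencil_mx P0 P1 i j) <= 2)%N.
Proof.
rewrite mxE; apply: leq_trans (size_polyD _ _) _; rewrite geq_max.
rewrite (leq_trans (size_polyC_leq1 _)) //=.
apply: leq_trans (size_polyMleq _ _) _; rewrite size_polyX.
by have := size_polyC_leq1 (P1 i j); lia.
Qed.

Lemma size_mul_leq1 (p q : {poly R}) n :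
  (size p <= 1)%N -> (size q <= n)%N -> (size (p * q)%R <= n)%N.
Proof. by move=> hp hq; apply: leq_trans (size_polyMleq _ _) _; lia. Qed.

Lemma size_prod_linear (I : Type) (r : seq I) (f : I -> {poly R}) :
  (forall i, size (f i) <= 2)%N -> (size (\prod_(i <- r) f i)%R <= (size r).+1)%N.
Proof.
move=> hf; elim: r => [|x r IH]; first by rewrite big_nil size_poly1.
rewrite big_cons /=; apply: leq_trans (size_polyMleq _ _) _.
by have := hf x; move: IH; move: (size _) (size (f x)) => u v; lia.
Qed.

Lemma size_det_linear n (M : 'M[{poly R}]_n) :
  (forall i j, size (M i j) <= 2)%N -> (size (\det M) <= n.+1)%N.
Proof.
move=> hM; apply: leq_trans (size_sum _ _ _) _.
apply/bigmax_leqP => s _; rewrite size_Msign.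
rewrite -[X in X.+1]size_enum_ord enumT.
exact: size_prod_linear.
Qed.

Lemma size_det_linear_const_row n (M : 'M[{poly R}]_n) a :
  (forall i j, size (M i j) <= 2)%N -> (forall j, size (M a j) <= 1)%N ->
  (size (\det M) <= n)%N.
Proof.
case: n M a => [|n] M a; first by case: a.
move=> hM ha; rewrite (expand_det_row _ a); apply: leq_trans (size_sum _ _ _) _.
apply/bigmax_leqP => j _; apply: size_mul_leq1 (ha j) _.
by rewrite /cofactor size_Msign; apply: size_det_linear => i l; rewrite !mxE.
Qed.

(* Expanding along row [a], every cofactor still contains the constant column [a]. *)
Lemma size_det_pencil n (P0 P1 : 'M[R]_n) a :
  row a P1 = 0 -> col a P1 = 0 -> P0 a a = 0 ->
  (size (\det (pencil_mx P0 P1)) <= n.-1)%N.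
Proof.
case: n P0 P1 a => [|n] P0 P1 a; first by case: a.
move=> r0 c0 P0aa; set M := pencil_mx P0 P1.
have P1r j : P1 a j = 0 by move/rowP: r0 => /(_ j); rewrite !mxE.
have P1c i : P1 i a = 0 by move/colP: c0 => /(_ i); rewrite !mxE.
rewrite (expand_det_row _ a); apply: leq_trans (size_sum _ _ _) _.
apply/bigmax_leqP => j _.
have [->|nja] := eqVneq j a.
  by rewrite mxE P0aa P1r mul0r addr0 mul0r size_poly0.
have [b jb] : exists b, lift j b = a.
  by case: (unliftP j a) => [b ->|aj]; [exists b | rewrite aj eqxx in nja].
apply: size_mul_leq1.
  by rewrite mxE P1r mul0r addr0 size_polyC_leq1.
rewrite /cofactor size_Msign -det_tr.
apply: (size_det_linear_const_row (a := b)) => [i l|l]; rewrite !mxE.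
  by have := size_pencil_mx P0 P1 (lift a l) (lift j i); rewrite mxE.
by rewrite jb P1c mul0r addr0 size_polyC_leq1.
Qed.

End Pencil.

Lemma poly_eq0_nonzero_roots (F : idomainType) (s : seq F) (p : {poly F}) :
  uniq s -> (size p < size s)%N ->
  (forall x, x \in s -> x != 0 -> root p x) -> p = 0.
Proof.
move=> us hs hr; apply: (roots_geq_poly_eq0 (rs := rem 0 s)).
- by apply/allP => x; rewrite rem_filter // mem_filter => /andP [nx /hr]; apply.
- exact: rem_uniq.
- have [/size_rem->|/rem_id->] := boolP (0 \in s); last exact: ltnW.
  by rewrite -ltnS (ltn_predK hs).
Qed.

Section TailOrthogonality.
Variables (F : fieldType) (k : nat) (A0 : 'M[F]_k.+2) (W : {vspace 'M[F]_k.+2}).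
Hypotheses (A0n : normalized A0) (A0alt : alternating A0)
  (Walt : forall B, B \in W -> alternating B) (A0W : symplectic_affine A0 W).
Variables (B N : 'M[F]_k.+2).
Hypotheses (BW : B \in W) (NW : N \in W)
  (N_row0 : forall l, N ord0 l = 0) (N_tail : tail_block N = 0).

Let e1 : 'rV[F]_k.+2 := delta_mx 0 ord_one.
Let h := tail_row0 B.
Let g := tail_row1 N.
Let D := tail_block A0.

Lemma e1_neq0 : e1 != 0.
Proof.
apply/eqP => /matrixP/(_ 0 ord_one); rewrite !mxE !eqxx.
by move/eqP; rewrite oner_eq0.
Qed.

Lemma mulmx_tail_row1 (w : 'rV[F]_k.+2) : w 0 ord_one = 0 ->
  w *m N = - (drop2 w *m g^T) 0 0 *: e1.
Proof.
move=> w1; have Nanti := alternating_antisym (Walt NW).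
apply/rowP=> l; rewrite mulmx_row_split N_row0 w1 mulr0 mul0r !add0r.
rewrite [RHS]mxE [(drop2 w *m _) 0 0]mxE [e1 0 l]mxE.
case: (ord_splitP l) => [->| ->|[l' ->]].
- rewrite eq_sym ord_one_eq0 andbF mulr0 big1 // => j _.
  by rewrite Nanti N_row0 oppr0 mulr0.
- rewrite eqxx mulr1 -sumrN; apply: eq_bigr => j _.
  by rewrite Nanti !mxE mulrN.
- rewrite lift2_eq1 andbF mulr0 big1 // => j _.
  by move/matrixP: N_tail => /(_ j l'); rewrite !mxE => ->; rewrite mulr0.
Qed.

Section Inverse.
Variable mu : F.
Let C := A0 + mu *: B.
Let w := e1 *m invmx C.

Lemma mul_e1_inv : w *m C = e1.
Proof.
have [_ /nondegenerate_unitmx Cu] : symplectic C by apply: A0W; rewrite memvZ.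
by rewrite /w mulmxKV.
Qed.

Lemma e1_inv_one_eq0 : w 0 ord_one = 0.
Proof.
have [Calt _] : symplectic C by apply: A0W; rewrite memvZ.
by have := Calt w; rewrite /bform mul_e1_inv -rowE !mxE.
Qed.

(* Otherwise [w] would lie in the radical of [A0 + mu B + N/q]. *)
Lemma e1_inv_tail_perp : (drop2 w *m g^T) 0 0 = 0.
Proof.
apply/eqP/negP => /negP nq; set q := (drop2 w *m g^T) 0 0 in nq.
have [_ /nondegenerateP rad] := A0W (rpredD (rpredZ mu BW) (rpredZ q^-1 NW)).
suff w0 : w = 0 by move: e1_neq0; rewrite -mul_e1_inv w0 mul0mx eqxx.
apply: rad; rewrite addrA mulmxDr mul_e1_inv -scalemxAr.
by rewrite mulmx_tail_row1 ?e1_inv_one_eq0 // scalerA mulrN mulVf // scaleN1r subrr.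
Qed.

End Inverse.

Lemma det_pencil_eq0 mu : mu != 0 ->
  \det (block_mx 0 h g^T D + mu *: block_mx 0 0 0 (tail_block B)) = 0.
Proof.
move=> mu0; apply/eqP/det0P.
move: (mul_e1_inv mu) (e1_inv_one_eq0 mu) (e1_inv_tail_perp mu).
set C := A0 + mu *: B; set w := e1 *m _ => wC w1 wg; clearbody w.
exists (row_mx (mu * w 0 ord0)%:M (drop2 w)).
  apply: contraNneq e1_neq0 => /eqP; rewrite -row_mx0 => /eqP /eq_row_mx [t0 z0].
  rewrite -wC (_ : w = 0) ?mul0mx //; apply/rowP => b; rewrite [RHS]mxE.
  case: (ord_splitP b) => [->| ->|[j ->]]; last 2 first.
  - exact: w1.
  - by move/rowP: z0 => /(_ j); rewrite !mxE.
  move/matrixP: t0 => /(_ 0 0) /eqP; rewrite !mxE mulr1n mulf_eq0.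
  by rewrite (negbTE mu0) => /eqP.
rewrite scale_block_mx !scaler0 add_block_mx !addr0.
rewrite (_ : D + mu *: tail_block B = tail_block C); last by rewrite linearD linearZ.
rewrite mul_row_block !mulmx0 add0r -row_mx0; congr row_mx.
  by apply/matrixP => i j; rewrite !ord1 wg mxE.
apply/rowP => l; rewrite mul_scalar_mx.
move/rowP: wC => /(_ (lift2 l)); rewrite mulmx_row_split w1 mul0r addr0.
rewrite [e1 _ _]mxE lift2_eq1 andbF !mxE A0n lift2_eq1 add0r => /= wl.
by rewrite -[RHS]wl -mulrA mulrCA; congr (_ + _); apply: eq_bigr => j _; rewrite !mxE.
Qed.

Lemma tail_row0_orthogonal (s : seq F) : uniq s -> (k.+1 <= size s)%N ->
  (h *m invmx D *m g^T) 0 0 = 0.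
Proof.
move=> us hs.
have Du : D \in unitmx.
  apply/nondegenerate_unitmx/nondegenerate_tail_block => //.
  by have [_] := A0W (mem0v W); rewrite addr0.
set P0 : 'M_(1 + k) := block_mx 0 h g^T D.
set P1 : 'M_(1 + k) := block_mx 0 0 0 (tail_block B).
have /det0P [y ny] : \det P0 == 0.
  have p0 : \det (pencil_mx P0 P1) = 0.
    apply: (poly_eq0_nonzero_roots us) => [|x _ nx]; last first.
      by rewrite /root horner_det_pencil det_pencil_eq0.
    apply: leq_ltn_trans hs; apply: (size_det_pencil (a := lshift k 0)).
    - by rewrite /P1 block_mxEv rowKu row_mx0 row0.
    - by rewrite /P1 block_mxEh colKl col_mx0 col0.
    - by rewrite block_mxEul mxE.
  by have := horner_det_pencil P0 P1 0; rewrite p0 horner0 scale0r addr0 => <-.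
rewrite -[y]hsubmxK in ny *; move: (lsubmx y) (rsubmx y) ny => t z ny.
rewrite mul_row_block mulmx0 add0r -row_mx0 => /eq_row_mx [zg tD].
rewrite [t]mx11_scalar mul_scalar_mx in tD.
have zD : z *m D = - (t 0 0 *: h) by apply/eqP; rewrite -addr_eq0 addrC tD.
have t0 : t 0 0 != 0.
  apply: contraNneq ny => t0.
  have -> : t = 0 by apply/matrixP => i j; rewrite !ord1 t0 mxE.
  by rewrite -(mulmxK Du z) zD t0 scale0r oppr0 mul0mx row_mx0.
move/matrixP/(_ 0 0): zg; rewrite -(mulmxK Du z) zD !mulNmx -!scalemxAl !mxE.
by move/eqP; rewrite oppr_eq0 mulf_eq0 (negbTE t0) => /eqP.
Qed.

End TailOrthogonality.

Lemma alternating_split_eq0 (F : fieldType) k (B : 'M[F]_k.+2) :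
  alternating B -> (forall l, B ord0 l = 0) -> tail_row1 B = 0 ->
  tail_block B = 0 -> B = 0.
Proof.
move=> hB B0 /rowP B1 /matrixP BR; have Banti := alternating_antisym hB.
have B1' j : B ord_one (lift2 j) = 0 by have := B1 j; rewrite !mxE.
apply/matrixP => a b; rewrite mxE.
case: (ord_splitP a) => [->| ->|[a' ->]]; first exact: B0;
  case: (ord_splitP b) => [->| ->|[b' ->]].
- by rewrite Banti B0 oppr0.
- exact: alternating_diag.
- exact: B1'.
- by rewrite Banti B0 oppr0.
- by rewrite Banti B1' oppr0.
- by have := BR a' b'; rewrite !mxE.
Qed.

Section Reduction.
Variables (F : fieldType) (k : nat) (A0 : 'M[F]_k.+2) (W : {vspace 'M[F]_k.+2}).
Hypotheses (A0n : normalized A0) (A0alt : alternating A0)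
  (Walt : forall B, B \in W -> alternating B) (A0W : symplectic_affine A0 W).

(* Otherwise the first basis vector would be in the radical of [A0 - B / B 0 1]. *)
Lemma row0_eq0 B : B \in W -> tail_row0 B = 0 -> forall l, B ord0 l = 0.
Proof.
move=> BW /rowP B0 l; have Balt := Walt BW.
have B0' j : B ord0 (lift2 j) = 0 by have := B0 j; rewrite !mxE.
have B01 : B ord0 ord_one = 0.
  apply/eqP/negP => /negP nc.
  have [_ /nondegenerateP rad] := A0W (rpredZ (- (B ord0 ord_one)^-1) BW).
  have : 'e_ord0 = 0 :> 'rV[F]_k.+2.
    apply: rad; apply/rowP=> b; rewrite -rowE !mxE A0n.
    case: (ord_splitP b) => [->| ->|[j ->]].
    - by rewrite eq_sym ord_one_eq0 alternating_diag // mulr0 mulr0n addr0.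
    - by rewrite eqxx mulNr mulVf // subrr.
    - by rewrite lift2_eq1 B0' mulr0 addr0.
  by move/matrixP/(_ 0 ord0); rewrite !mxE !eqxx => /eqP; rewrite oner_eq0.
by case: (ord_splitP l) => [->| ->|[j ->]]; rewrite ?alternating_diag.
Qed.

Let K := (W :&: lker (linfun (@tail_row0 F k)))%VS.
Let G := (K :&: lker (linfun (@tail_block F k)))%VS.

Lemma mem_tail_row0_ker B : B \in K -> B \in W /\ forall l, B ord0 l = 0.
Proof.
rewrite memv_cap memv_ker lfunE /= => /andP [BW /eqP B0].
by split => //; apply: row0_eq0.
Qed.

Lemma tail_symplectic_affine :
  [/\ alternating (tail_block A0),
      forall B, B \in (linfun (@tail_block F k) @: K)%VS -> alternating B
    & symplectic_affine (tail_block A0) (linfun (@tail_block F k) @: K)].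
Proof.
split; first exact: alternating_tail_block.
  move=> _ /memv_imgP [B /mem_tail_row0_ker [/Walt Balt _] ->].
  by rewrite lfunE; apply: alternating_tail_block.
move=> _ /memv_imgP [B /mem_tail_row0_ker [BW B0] ->]; rewrite lfunE /= -linearD /=.
have [Calt CN] := A0W BW; split; first exact: alternating_tail_block.
by apply: nondegenerate_tail_block => // l; rewrite mxE B0 addr0 A0n.
Qed.

Lemma dim_tail_row1_img : \dim (linfun (@tail_row1 F k) @: G) = \dim G.
Proof.
apply: limg_dim_eq; apply/eqP; rewrite -subv0; apply/subvP => B.
rewrite memv0 !memv_cap !memv_ker !lfunE /=.
move=> /andP [/andP [/andP [BW /eqP B0] /eqP BR] /eqP B1].
by apply/eqP/alternating_split_eq0 => //; [apply: Walt | apply: row0_eq0].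
Qed.

Lemma dim_tail_rows_leq (s : seq F) : uniq s -> (k.+1 <= size s)%N ->
  (\dim (linfun (@tail_row0 F k) @: W) + \dim (linfun (@tail_row1 F k) @: G) <= k)%N.
Proof.
move=> us hs; apply: (orthogonal_dim_leq (M := invmx (tail_block A0))).
  rewrite unitmx_inv -nondegenerate_unitmx; apply: nondegenerate_tail_block => //.
  by have [_] := A0W (mem0v W); rewrite addr0.
move=> _ _ /memv_imgP [B BW ->] /memv_imgP [N NG ->]; rewrite !lfunE /=.
move: NG; rewrite !memv_cap !memv_ker !lfunE /=.
move=> /andP [/andP [NW /eqP /(row0_eq0 NW) N0] /eqP NR].
exact: (tail_row0_orthogonal A0n A0alt Walt A0W BW NW N0 NR us hs).
Qed.

Lemma dim_leq_tail_img (s : seq F) : uniq s -> (k.+1 <= size s)%N ->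
  (\dim W <= \dim (linfun (@tail_block F k) @: K) + k)%N.
Proof.
move=> us hs; have := dim_tail_rows_leq us hs; rewrite dim_tail_row1_img => perp.
rewrite -(limg_ker_dim (linfun (@tail_row0 F k)) W) -/K.
rewrite -(limg_ker_dim (linfun (@tail_block F k)) K) -/G.
by rewrite addnAC addnC leq_add2l addnC.
Qed.

End Reduction.

Lemma dim_symplectic_affine_leq (F : fieldType) (s : seq F) n :
  uniq s -> (2 * n - 1 <= size s)%N ->
  forall (A0 : 'M[F]_(2 * n)) (W : {vspace 'M[F]_(2 * n)}),
  (forall B, B \in W -> alternating B) -> alternating A0 ->
  symplectic_affine A0 W -> (\dim W <= n * (n - 1))%N.
Proof.
move=> us; elim: n => [|n IH] hs A0 W.
  by have := dimvS (subvf W); rewrite dimvf dim_matrix.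
move: A0 W; rewrite (_ : 2 * n.+1 = (2 * n).+2)%N; last by lia.
move=> A0 W Walt A0alt A0W.
have [P Pu A0n] : exists2 P, P \in unitmx & normalized (cong P A0).
  by apply: normalize_cong => //; have [_] := A0W 0 (mem0v W); rewrite addr0.
have [Walt' A0alt' A0W' <-] := symplectic_affine_cong Pu Walt A0alt A0W.
have [A0alt2 Walt2 A0W2] := tail_symplectic_affine A0n A0alt' Walt' A0W'.
have hs1 : (2 * n - 1 <= size s)%N by lia.
have hs2 : ((2 * n).+1 <= size s)%N by lia.
apply: leq_trans (dim_leq_tail_img A0n A0alt' Walt' A0W' us hs2) _.
apply: leq_trans (leq_add (IH hs1 _ _ Walt2 A0alt2 A0W2) (leqnn _)) _.
have arith m : (m * (m - 1) + 2 * m <= m.+1 * (m.+1 - 1))%N.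
  by case: m => //= m; nia.
exact: arith.
Qed.

Section LowerBound.
Variables (F : fieldType) (n : nat).

Lemma nondegenerate_block (X C : 'M[F]_n) : C \in unitmx ->
  Defs.nondegenerate (block_mx X C (- C^T) 0).
Proof.
move=> Cu; apply/nondegenerateP => x.
rewrite -[x]hsubmxK mul_row_block mulmx0 addr0 -row_mx0 => /eq_row_mx [xl xr].
have xl0 : lsubmx x = 0 by rewrite -(mulmxK Cu (lsubmx x)) xr mul0mx.
move: xl; rewrite xl0 mul0mx add0r mulmxN => /eqP; rewrite oppr_eq0 => /eqP xC.
by rewrite -(mulmxK (_ : C^T \in unitmx) (rsubmx x)) ?unitmx_tr // xC mul0mx.
Qed.

Definition strict_lower (Z : 'M[F]_n) : 'M[F]_n :=
  \matrix_(i, j) (if (j < i)%N then Z i j else 0).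
Definition strict_upper (Z : 'M[F]_n) : 'M[F]_n :=
  \matrix_(i, j) (if (i < j)%N then Z i j else 0).

Fact strict_lower_is_semilinear : semilinear strict_lower.
Proof.
by split=> [c A|A1 A2]; apply/matrixP=> i j; rewrite !mxE; case: ifP; rewrite ?mulr0 ?addr0.
Qed.
HB.instance Definition _ :=
  GRing.isSemilinear.Build F _ _ _ strict_lower strict_lower_is_semilinear.

Fact strict_upper_is_semilinear : semilinear strict_upper.
Proof.
by split=> [c A|A1 A2]; apply/matrixP=> i j; rewrite !mxE; case: ifP; rewrite ?mulr0 ?addr0.
Qed.
HB.instance Definition _ :=
  GRing.isSemilinear.Build F _ _ _ strict_upper strict_upper_is_semilinear.

Definition lower_upper (Z : 'M[F]_n) : 'M[F]_(n + n) :=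
  block_mx (strict_lower Z) (strict_upper Z) 0 0.

Fact lower_upper_is_semilinear : semilinear lower_upper.
Proof.
split=> [c A|A1 A2]; rewrite /lower_upper.
  by rewrite !linearZ /= scale_block_mx !scaler0.
by rewrite !linearD /= add_block_mx !addr0.
Qed.
HB.instance Definition _ :=
  GRing.isSemilinear.Build F _ _ _ lower_upper lower_upper_is_semilinear.

Definition skew_param (Z : 'M[F]_n) : 'M[F]_(n + n) :=
  lower_upper Z - (lower_upper Z)^T.

Fact skew_param_is_semilinear : semilinear skew_param.
Proof.
split=> [c A|A1 A2]; rewrite /skew_param.
  by rewrite !linearZ /= scalerDr.
by rewrite !linearD /= addrACA.
Qed.
HB.instance Definition _ :=
  GRing.isSemilinear.Build F _ _ _ skew_param skew_param_is_semilinear.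

Definition diag_row (Z : 'M[F]_n) : 'rV[F]_n := \row_i Z i i.

Fact diag_row_is_semilinear : semilinear diag_row.
Proof. by split=> [c A|A1 A2]; apply/rowP=> i; rewrite !mxE. Qed.
HB.instance Definition _ :=
  GRing.isSemilinear.Build F _ _ _ diag_row diag_row_is_semilinear.

Definition zero_diag : {vspace 'M[F]_n} := lker (linfun diag_row).
Definition skew_space : {vspace 'M[F]_(n + n)} := (linfun skew_param @: zero_diag)%VS.
Definition std_symplectic : 'M[F]_(n + n) :=
  block_mx 0 1%:M 0 0 - (block_mx 0 1%:M 0 0)^T.

Lemma dim_zero_diag : \dim zero_diag = (n * n - n)%N.
Proof.
have := limg_ker_dim (linfun diag_row) fullv; rewrite capfv -/zero_diag.
have -> : (linfun diag_row @: fullv)%VS = fullv.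
  apply/vspaceP=> r; rewrite memvf; apply/memv_imgP; exists (diag_mx r).
    by rewrite memvf.
  by rewrite lfunE /=; apply/rowP=> i; rewrite !mxE eqxx mulr1n.
by rewrite !dimvf !dim_matrix mul1r => /(congr1 (subn^~ n)); rewrite addnK.
Qed.

Lemma dim_skew_space : \dim skew_space = (n * (n - 1))%N.
Proof.
rewrite /skew_space limg_dim_eq ?dim_zero_diag ?mulnBr ?muln1 //.
apply/eqP; rewrite -subv0; apply/subvP => Z.
rewrite memv_cap !memv_ker !lfunE /= memv0 => /andP [/eqP Zd /eqP ZP].
move: ZP; rewrite /skew_param /lower_upper tr_block_mx !trmx0 opp_block_mx !oppr0.
rewrite add_block_mx addr0 add0r -(block_mx0 _ n n n n).
move=> /eq_block_mx [Zl Zu _ _].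
apply/eqP/matrixP=> i j; rewrite [RHS]mxE.
case: (ltngtP i j) => ij.
- by move/matrixP: Zu => /(_ i j); rewrite !mxE ij.
- move/matrixP: Zl => /(_ i j); rewrite !mxE ij.
  by rewrite ltnNge (ltnW ij) subr0.
- by move/rowP: Zd => /(_ i); rewrite !mxE (val_inj ij).
Qed.

Lemma unitmx_1_add_strict_upper (Z : 'M[F]_n) : 1%:M + strict_upper Z \in unitmx.
Proof.
rewrite -unitmx_tr unitmxE det_trig.
  by rewrite big1 ?unitr1 // => i _; rewrite !mxE eqxx ltnn addr0.
apply/is_trig_mxP => i j ij; rewrite !mxE ltnNge (ltnW ij) addr0.
by rewrite (_ : (j == i) = false) //; apply/negbTE; rewrite neq_ltn ij orbT.
Qed.

Lemma std_symplectic_add_skew_param (Z : 'M[F]_n) :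
  std_symplectic + skew_param Z =
  block_mx (strict_lower Z - (strict_lower Z)^T) (1%:M + strict_upper Z)
           (- (1%:M + strict_upper Z)^T) 0.
Proof.
rewrite /std_symplectic /skew_param /lower_upper addrACA -opprD -linearD /=.
rewrite add_block_mx !add0r tr_block_mx !trmx0 opp_block_mx !oppr0.
by rewrite add_block_mx !addr0 add0r.
Qed.

Lemma symplectic_affine_skew_space :
  [/\ forall B, B \in skew_space -> alternating B, alternating std_symplectic,
      symplectic_affine std_symplectic skew_space
    & \dim skew_space = (n * (n - 1))%N].
Proof.
split; last exact: dim_skew_space.
- by move=> _ /memv_imgP [Z _ ->]; rewrite lfunE; apply: alternating_subtr.
- exact: alternating_subtr.
move=> _ /memv_imgP [Z _ ->]; rewrite lfunE /=; split.
  by rewrite /std_symplectic /skew_param addrACA -opprD -linearD; apply: alternating_subtr.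
rewrite std_symplectic_add_skew_param; apply: nondegenerate_block.
exact: unitmx_1_add_strict_upper.
Qed.

End LowerBound.

Unset Implicit Arguments.

Theorem theorem3 (F : fieldType) (n : nat)
  (hF : exists s : seq F, uniq s /\ (2 * n - 1 <= size s)%N) :
  (exists (A0 : 'M[F]_(2 * n)) (W : {vspace 'M[F]_(2 * n)}),
      (forall B, B \in W -> alternating B) /\ alternating A0 /\
      symplectic_affine A0 W /\ \dim W = (n * (n - 1))%N)
  /\ (forall (A0 : 'M[F]_(2 * n)) (W : {vspace 'M[F]_(2 * n)}),
      (forall B, B \in W -> alternating B) -> alternating A0 ->
      symplectic_affine A0 W -> (\dim W <= n * (n - 1))%N).
Proof.
have [s [us hs]] := hF; split; last first.
  by move=> A0 W Walt A0alt A0W; exact: (dim_symplectic_affine_leq us hs Walt A0alt A0W).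
rewrite mul2n -addnn.
have [Walt A0alt A0W dimW] := symplectic_affine_skew_space F n.
by exists (std_symplectic F n), (skew_space F n).
Qed.
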